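(* Let $M$ be a metric space, $X$ a Banach space and $\lambda\geq1$. If $M$ is finitely $\lambda$-Lipschitz representable in $X$, then $\mathcal F(M)$ is $\lambda$-finitely representable in $\mathcal F(X)$.
   Context: For an injective map $\phi$ between metric spaces, $\mathrm{dist}(\phi)=\mathrm{Lip}(\phi)\,\mathrm{Lip}(\phi^{-1})$. $M$ is finitely $\lambda$-Lipschitz representable in $X$ if for every finite $F\subset M$ and every $\varepsilon>0$ there is a map $\phi\colon F\to X$ with $\mathrm{dist}(\phi)\leq\lambda+\varepsilon$. A Banach space $E_0$ is $\lambda$-finitely representable in a Banach space $Y$ if for every finite-dimensional subspace $E$ of $E_0$ and every $\varepsilon>0$ there is a finite-dimensional subspace $F$ of $Y$ with Banach–Mazur distance $d(E,F)\leq\lambda+\varepsilon$. For a pointed metric space $M$ (any base point), $\mathrm{Lip}_0(M)$ is the Banach space of real Lipschitz functions vanishing at the base point normed by the Lipschitz constant, and $\mathcal F(M)=\overline{\mathrm{span}}\{\delta(x):x\in M\}\subset\mathrm{Lip}_0(M)^*$ is the Lipschitz-free space, $\delta(x)$ being evaluation at $x$; a Banach space $X$ is pointed at $0$. *)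

From HB Require Import structures.
From mathcomp Require Import all_boot all_order all_algebra.
From mathcomp Require Import all_classical all_reals all_analysis.
Import Order.TTheory GRing.Theory Num.Theory.
Local Open Scope classical_set_scope.
Local Open Scope ring_scope.

Set Implicit Arguments.
Unset Strict Implicit.
Unset Printing Implicit Defensive.

Definition is_metric (R : realType) (M : Type) (d : M -> M -> R) : Prop :=
  [/\ (forall x y, 0 <= d x y), (forall x y, d x y = 0 <-> x = y),
      (forall x y, d x y = d y x) & (forall x y z, d x z <= d x y + d y z)].

Definition normdist (R : realType) (X : normedModType R) (x y : X) : R := `|x - y|.
Definition rdist (R : realType) (a b : R) : R := `|a - b|.

Definition lipc (R : realType) (A B : Type) (dA : A -> A -> R) (dB : B -> B -> R)
  (D : set A) (f : A -> B) : \bar R :=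
  ereal_inf [set L%:E | L in [set L : R | 0 <= L /\
     forall x y, D x -> D y -> dB (f x) (f y) <= L * dA x y]].

(* Lipschitz constant of the inverse of an injective f : D -> f(D),
   written out (f^{-1} (f x) = x) *)
Definition lipc_inv (R : realType) (A B : Type) (dA : A -> A -> R) (dB : B -> B -> R)
  (D : set A) (f : A -> B) : \bar R :=
  ereal_inf [set L%:E | L in [set L : R | 0 <= L /\
     forall x y, D x -> D y -> dA x y <= L * dB (f x) (f y)]].

Definition distortion (R : realType) (A B : Type) (dA : A -> A -> R) (dB : B -> B -> R)
  (D : set A) (f : A -> B) : \bar R :=
  (lipc dA dB D f * lipc_inv dA dB D f)%E.

Definition fin_lip_representable (R : realType) (M Y : Type) (dM : M -> M -> R)
  (dY : Y -> Y -> R) (lam : R) : Prop :=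
  forall F : set M, finite_set F -> forall eps : R, 0 < eps ->
    exists phi : M -> Y,
      (forall x y, F x -> F y -> phi x = phi y -> x = y) /\
      (distortion dM dY F phi <= (lam + eps)%:E)%E.

Definition lip0 (R : realType) (M : Type) (dM : M -> M -> R) (p : M) (f : M -> R) : Prop :=
  f p = 0 /\ (lipc dM (@rdist R) setT f < +oo)%E.

Definition Lip0 (R : realType) (M : Type) (dM : M -> M -> R) (p : M) : Type :=
  {f : M -> R | lip0 dM p f}.

Definition lipnorm (R : realType) (M : Type) (dM : M -> M -> R) (p : M)
  (f : Lip0 dM p) : \bar R := lipc dM (@rdist R) setT (proj1_sig f).

Definition dnorm (R : realType) (M : Type) (dM : M -> M -> R) (p : M)
  (phi : Lip0 dM p -> R) : \bar R :=
  ereal_sup [set (`|phi f|)%:E | f in [set f | (lipnorm f <= 1)%E]].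

Definition in_dual (R : realType) (M : Type) (dM : M -> M -> R) (p : M)
  (phi : Lip0 dM p -> R) : Prop :=
  [/\ (forall f g h : Lip0 dM p,
         proj1_sig h = (fun x => proj1_sig f x + proj1_sig g x) -> phi h = phi f + phi g),
      (forall (a : R) (f g : Lip0 dM p),
         proj1_sig g = (fun x => a * proj1_sig f x) -> phi g = a * phi f)
    & (dnorm phi < +oo)%E].

Definition delta (R : realType) (M : Type) (dM : M -> M -> R) (p : M) (x : M) :
  Lip0 dM p -> R := fun f => proj1_sig f x.

Definition span (R : realType) (V : lmodType R) (S : set V) : set V :=
  [set v | exists (n : nat) (a : 'I_n -> R) (s : 'I_n -> V),
             (forall i, S (s i)) /\ v = \sum_(i < n) a i *: s i].

(* Lipschitz-free space F(M): closed linear span of {delta x} in Lip_0(M)^* *)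
Definition FreeSpace (R : realType) (M : Type) (dM : M -> M -> R) (p : M) :
  set (Lip0 dM p -> R) :=
  [set phi : Lip0 dM p -> R | in_dual phi /\
     forall eps : R, 0 < eps -> exists psi : Lip0 dM p -> R, span (range (@delta R M dM p)) psi /\
        (dnorm (phi - psi)%R < eps%:E)%E].

Definition fd_subspace (R : realType) (V : lmodType R) (W E : set V) : Prop :=
  exists s : seq V, (forall v, v \in s -> W v) /\ E = span [set v | v \in s].

Definition opnorm (R : realType) (V1 V2 : lmodType R) (N1 : V1 -> \bar R)
  (N2 : V2 -> \bar R) (E : set V1) (T : V1 -> V2) : \bar R :=
  ereal_sup [set N2 (T u) | u in [set u | E u /\ (N1 u <= 1)%E]].

Definition lin_iso (R : realType) (V1 V2 : lmodType R) (E : set V1) (F : set V2)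
  (T : V1 -> V2) (S : V2 -> V1) : Prop :=
  [/\ (forall u, E u -> F (T u)), (forall w, F w -> E (S w)),
      (forall u, E u -> S (T u) = u), (forall w, F w -> T (S w) = w)
    & (forall (a : R) u v, E u -> E v -> T (a *: u + v) = a *: T u + T v)].

Definition bm_dist (R : realType) (V1 V2 : lmodType R) (N1 : V1 -> \bar R)
  (N2 : V2 -> \bar R) (E : set V1) (F : set V2) : \bar R :=
  ereal_inf [set (opnorm N1 N2 E TS.1 * opnorm N2 N1 F TS.2)%E
            | TS in [set TS : (V1 -> V2) * (V2 -> V1) | lin_iso E F TS.1 TS.2]].

Definition fin_representable (R : realType) (V1 V2 : lmodType R)
  (N1 : V1 -> \bar R) (W1 : set V1) (N2 : V2 -> \bar R) (W2 : set V2) (lam : R) : Prop :=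
  forall E, fd_subspace W1 E -> forall eps : R, 0 < eps ->
    exists F, fd_subspace W2 F /\ (bm_dist N1 N2 E F <= (lam + eps)%:E)%E.

From Pilot Require Import Defs.
From HB Require Import structures.
From mathcomp Require Import all_boot all_order all_algebra.
From mathcomp Require Import all_classical all_reals all_analysis.
From mathcomp.algebra_tactics Require Import ring lra.
From Stdlib Require List.
Import Order.TTheory GRing.Theory Num.Theory.
Local Open Scope classical_set_scope.
Local Open Scope ring_scope.
Set Implicit Arguments.
Unset Strict Implicit.
Unset Printing Implicit Defensive.

(* Let E be spanned by finitely many elements of F(M).  A Lagrange basis v_1, ..., v_k
   of E with nodes x_1, ..., x_k in Lip_0(M) (v_i(x_j) = [i = j]) writes every u in E
   as sum_j u(x_j) v_j, with |u(x_j)| <= Lip(x_j) ||u||.  Each v_j is uniformly close,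
   on the unit ball of Lip_0(M), to a finite combination of point evaluations; let F_0
   be the finite set of points involved.  Embedding F_0 into X by phi with Lipschitz
   constants A and B, AB close to lam, and pushing these combinations forward gives a
   linear map T from E into F(X).  McShane extensions of Lipschitz functions from F_0
   to M, and from phi(F_0) to X, yield ||T u|| <= A (1 + theta) ||u|| and
   (1 - theta) ||u|| <= B ||T u||, where theta = (sum_j Lip(x_j)) delta and delta is
   the accuracy of the approximations. *)

(** * Lagrange bases of finite-dimensional spaces of functions *)

Section LagrangeBasis.
Variables (K : fieldType) (L : Type).

Definition is_lcomb (s : seq (L -> K)) (mu : L -> K) : Prop :=
  exists c : nat -> K, forall f, mu f = \sum_(i < size s) c i * s`_i f.

Definition reproduces (k : nat) (v : nat -> L -> K) (x : nat -> L) (mu : L -> K) :=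
  forall f, mu f = \sum_(j < k) mu (x j) * v j f.

Definition biorthogonal (k : nat) (v : nat -> L -> K) (x : nat -> L) :=
  forall i j, (i < k)%N -> (j < k)%N -> v i (x j) = (i == j)%:R.

Lemma sum_kronecker (F : nat -> K) n i : (i < n)%N ->
  \sum_(j < n) F j * (i == j)%:R = F i.
Proof.
move=> lt_in; rewrite (bigD1 (Ordinal lt_in)) //= eqxx mulr1 big1 ?addr0 //.
move=> j neq_ji; suff /negPf-> : i != j by rewrite mulr0.
by apply: contra neq_ji => /eqP eq_ij; apply/eqP/val_inj.
Qed.

Section Lcomb.
Variable s : seq (L -> K).

Lemma is_lcomb_eq u u' : is_lcomb s u -> u =1 u' -> is_lcomb s u'.
Proof. by move=> lc_u /funext <-. Qed.

Lemma is_lcomb0 : is_lcomb s 0.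
Proof. by exists (fun=> 0) => f; rewrite big1 // => i _; rewrite mul0r. Qed.

Lemma is_lcomb_comb a u w : is_lcomb s u -> is_lcomb s w ->
  is_lcomb s (fun f => a * u f + w f).
Proof.
move=> [cu eq_u] [cw eq_w]; exists (fun i => a * cu i + cw i) => f.
by rewrite eq_u eq_w mulr_sumr -big_split; apply: eq_bigr => i _ /=; ring.
Qed.

Lemma is_lcomb_sum (I : Type) (r : seq I) (a : I -> K) (v : I -> L -> K) :
  (forall i, is_lcomb s (v i)) -> is_lcomb s (fun f => \sum_(i <- r) a i * v i f).
Proof.
move=> lc_v; elim: r => [|i r IHr].
  by apply: is_lcomb_eq is_lcomb0 _ => f; rewrite big_nil.
have [c eq_c] := is_lcomb_comb (a i) (lc_v i) IHr.
by exists c => f; rewrite big_cons -eq_c.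
Qed.

Lemma is_lcomb_nth i : is_lcomb s s`_i.
Proof.
have [lt_is|le_si] := ltnP i (size s).
  exists (fun j => (i == j)%:R) => f.
  by rewrite -[LHS](sum_kronecker (fun j => s`_j f) lt_is); apply: eq_bigr => j _; rewrite mulrC.
by exists (fun=> 0) => f; rewrite nth_default // big1 // => j _; rewrite mul0r.
Qed.

End Lcomb.

Section Reproduces.
Variables (k : nat) (v : nat -> L -> K) (x : nat -> L).

Lemma reproduces_comb a u w : reproduces k v x u -> reproduces k v x w ->
  reproduces k v x (fun f => a * u f + w f).
Proof.
move=> rep_u rep_w f; rewrite rep_u rep_w mulr_sumr -big_split.
by apply: eq_bigr => j _ /=; rewrite mulrDl mulrA.
Qed.

Lemma reproduces_sum (I : Type) (r : seq I) (a : I -> K) (F : I -> L -> K) :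
  (forall i, reproduces k v x (F i)) ->
  reproduces k v x (fun f => \sum_(i <- r) a i * F i f).
Proof.
move=> rep_F; elim: r => [|i r IHr].
  by move=> f; rewrite big_nil big1 // => j _; rewrite big_nil mul0r.
have -> : (fun f => \sum_(j <- i :: r) a j * F j f) =
          (fun f => a i * F i f + \sum_(j <- r) a j * F j f).
  by apply: funext => f; rewrite big_cons.
exact: reproduces_comb.
Qed.

Lemma reproduces_lcomb s mu : (forall i, reproduces k v x s`_i) ->
  is_lcomb s mu -> reproduces k v x mu.
Proof.
move=> rep_s [c eq_mu]; have -> : mu = fun f => \sum_(i < size s) c i * s`_i f.
  exact: funext.
exact: reproduces_sum.
Qed.

Lemma reproduces_basis j : biorthogonal k v x -> (j < k)%N -> reproduces k v x (v j).
Proof.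
move=> bio lt_jk f.
rewrite -[LHS](sum_kronecker (fun i => v i f) lt_jk).
by apply: eq_bigr => i _; rewrite bio // mulrC.
Qed.

End Reproduces.

Definition extend_basis k (v : nat -> L -> K) (g0 : L) (vk : L -> K) : nat -> L -> K :=
  fun j => if j == k then vk else fun f => - v j g0 * vk f + v j f.

Definition extend_nodes k (x : nat -> L) (g0 : L) : nat -> L :=
  fun j => if j == k then g0 else x j.

Section Extend.
Variables (k : nat) (v : nat -> L -> K) (x : nat -> L) (g0 : L) (vk : L -> K).
Hypotheses (vk_g0 : vk g0 = 1) (vk_x : forall i, (i < k)%N -> vk (x i) = 0).

Lemma biorthogonal_extend : biorthogonal k v x ->
  biorthogonal k.+1 (extend_basis k v g0 vk) (extend_nodes k x g0).
Proof.
move=> bio i j lt_i lt_j.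
have lt_k n : (n < k.+1)%N -> n != k -> (n < k)%N.
  by move=> lt_n neq_nk; rewrite ltn_neqAle neq_nk -ltnS.
have [->|neq_ik] := eqVneq i k; have [->|neq_jk] := eqVneq j k;
  rewrite /extend_basis /extend_nodes ?eqxx.
- exact: vk_g0.
- by rewrite (negPf neq_jk) vk_x ?lt_k // eq_sym (negPf neq_jk).
- by rewrite (negPf neq_ik) vk_g0 mulr1 addNr.
- by rewrite (negPf neq_ik) (negPf neq_jk) vk_x ?lt_k // mulr0 add0r bio ?lt_k.
Qed.

Lemma reproduces_extend mu : reproduces k v x mu ->
  reproduces k.+1 (extend_basis k v g0 vk) (extend_nodes k x g0) mu.
Proof.
move=> rep_mu f; rewrite big_ord_recr /= /extend_basis /extend_nodes eqxx.
under eq_bigr => j _ do rewrite (ltn_eqF (ltn_ord j)) mulrDr.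
rewrite big_split /= -rep_mu.
have -> : \sum_(j < k) mu (x j) * (- v j g0 * vk f) =
          - (\sum_(j < k) mu (x j) * v j g0) * vk f.
  by rewrite mulNr mulr_suml -sumrN; apply: eq_bigr => j _; ring.
by rewrite -rep_mu; ring.
Qed.

Lemma reproduces_extend_node c :
  reproduces k.+1 (extend_basis k v g0 vk) (extend_nodes k x g0) (fun f => c * vk f).
Proof.
move=> f; rewrite big_ord_recr /= /extend_basis /extend_nodes eqxx big1 ?add0r.
  by rewrite vk_g0 mulr1.
by move=> j _; rewrite (ltn_eqF (ltn_ord j)) vk_x // mulr0 mul0r.
Qed.

End Extend.

Variable s : seq (L -> K).

(* Either [u] is already reproduced, or its residual [w] is nonzero at some
   [g0], which becomes a new node with basis function [w / w g0]. *)
Lemma lagrange_basis_step k v x u :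
  biorthogonal k v x -> (forall j, is_lcomb s (v j)) -> is_lcomb s u ->
  exists k' v' x', [/\ biorthogonal k' v' x', forall j, is_lcomb s (v' j),
    reproduces k' v' x' u & forall mu, reproduces k v x mu -> reproduces k' v' x' mu].
Proof.
move=> bio lc_v lc_u.
pose w f := u f - \sum_(j < k) u (x j) * v j f.
have w_x i : (i < k)%N -> w (x i) = 0.
  move=> lt_ik; rewrite /w (eq_bigr (fun j : 'I_k => u (x j) * (i == j)%:R)).
    by rewrite (sum_kronecker (fun j => u (x j))) // subrr.
  by move=> j _; rewrite bio // eq_sym.
have lc_w : is_lcomb s w.
  apply: is_lcomb_eq (is_lcomb_comb (-1) (is_lcomb_sum (index_enum 'I_k)
    (fun j : 'I_k => u (x j)) (fun j => lc_v j)) lc_u) _.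
  by move=> f; rewrite /w; ring.
case: (pselect (exists g0, w g0 != 0)) => [[g0 wg0_neq0]|w_eq0]; last first.
  exists k, v, x; split => // f; apply/eqP; rewrite -subr_eq0.
  by apply/negPn/negP => wf_neq0; apply: w_eq0; exists f.
pose vk f := (w g0)^-1 * w f.
have vk_g0 : vk g0 = 1 by rewrite /vk mulVf.
have vk_x i : (i < k)%N -> vk (x i) = 0 by move=> /w_x; rewrite /vk => ->; rewrite mulr0.
have lc_vk : is_lcomb s vk.
  by apply: is_lcomb_eq (is_lcomb_comb (w g0)^-1 lc_w (is_lcomb0 s)) _ => f; apply: addr0.
exists k.+1, (extend_basis k v g0 vk), (extend_nodes k x g0); split.
- exact: biorthogonal_extend.
- by move=> j; rewrite /extend_basis; case: ifP => _; last exact: is_lcomb_comb.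
- have rep_sum := reproduces_sum (index_enum 'I_k) (fun j : 'I_k => u (x j))
    (fun j => reproduces_extend g0 vk (reproduces_basis bio (ltn_ord j))).
  have := reproduces_comb 1 (reproduces_extend_node v vk_g0 vk_x (w g0)) rep_sum.
  have -> // : (fun f => 1 * (w g0 * vk f) + \sum_(j < k) u (x j) * v j f) = u.
  by apply: funext => f; rewrite mul1r /vk mulrA mulfV ?mul1r // subrK.
- exact: reproduces_extend.
Qed.

(* [l0] only fills the entries of the node sequence beyond the basis size. *)
Lemma lagrange_basis (l0 : L) :
  exists k v x, [/\ biorthogonal k v x, forall j, is_lcomb s (v j)
    & forall mu, is_lcomb s mu -> reproduces k v x mu].
Proof.
suff [k [v [x [bio lc_v rep_s]]]] : exists k v x, [/\ biorthogonal k v x,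
    forall j, is_lcomb s (v j) & forall i, (i < size s)%N -> reproduces k v x s`_i].
  exists k, v, x; split => // mu; apply: reproduces_lcomb => i.
  have [/rep_s //|le_si] := ltnP i (size s).
  by move=> f; rewrite nth_default // big1 // => j _; apply: mul0r.
elim: (size s) => [|m [k [v [x [bio lc_v rep_s]]]]].
  exists 0%N, (fun _ _ => 0), (fun=> l0); split => // j.
  exact: is_lcomb0.
have [k' [v' [x' [bio' lc_v' rep_m rep_old]]]] := lagrange_basis_step bio lc_v (is_lcomb_nth s m).
exists k', v', x'; split => // i; rewrite ltnS leq_eqVlt => /orP[/eqP-> //|lt_im].
exact/rep_old/rep_s.
Qed.

End LagrangeBasis.

(** * Lipschitz constants and the dual norm of [Lip0] *)

Section LipschitzConstant.
Variables (R : realType) (A B : Type) (dA : A -> A -> R) (dB : B -> B -> R).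
Hypothesis dA_ge0 : forall x y, 0 <= dA x y.

Lemma lipc_le (D : set A) (f : A -> B) (c : R) : 0 <= c ->
  (lipc dA dB D f <= c%:E)%E <->
  (forall x y, D x -> D y -> dB (f x) (f y) <= c * dA x y).
Proof.
move=> c_ge0; split => [le_lc x y Dx Dy|bound_c]; last first.
  by apply: ereal_inf_lbound; exists c.
apply/ler_addgt0Pr => e e_gt0; have dxy1_gt0 : 0 < dA x y + 1 by rewrite ltr_wpDl.
have /ereal_inf_lt[_ [L [L_ge0 bound_L] <-]] :
    (lipc dA dB D f < (c + e / (dA x y + 1))%:E)%E.
  by apply: le_lt_trans le_lc _; rewrite lte_fin ltrDl divr_gt0.
rewrite lte_fin => lt_L; apply: le_trans (bound_L x y Dx Dy) _.
apply: le_trans (_ : (c + e / (dA x y + 1)) * dA x y <= _).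
  by apply: ler_wpM2r => //; apply: ltW.
rewrite mulrDl lerD2l mulrAC ler_pdivrMr // ler_wpM2l ?ltW //.
by rewrite ltrDl.
Qed.

Lemma lipc_ge0 (D : set A) (f : A -> B) : (0 <= lipc dA dB D f)%E.
Proof. by apply: le_ereal_inf_tmp => _ [L [L_ge0 _] <-]; rewrite lee_fin. Qed.

End LipschitzConstant.

Lemma lipc_gt0 (R : realType) (T U : Type) (dT : T -> T -> R) (dU : U -> U -> R)
  (D : set T) (f : T -> U) x y : (forall x y, 0 <= dT x y) ->
  D x -> D y -> 0 < dU (f x) (f y) -> (0 < lipc dT dU D f)%E.
Proof.
move=> dT_ge0 Dx Dy dfxy_gt0; rewrite lt_def lipc_ge0 // andbT.
apply/eqP => lipc_eq0; have : (lipc dT dU D f <= 0%:E)%E by rewrite lipc_eq0.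
by move/(lipc_le dU dT_ge0 D f (lexx 0))/(_ x y Dx Dy); rewrite mul0r leNgt dfxy_gt0.
Qed.

Section Lip0.
Variables (R : realType) (T : Type) (d : T -> T -> R) (p : T).
Hypothesis d_ge0 : forall x y, 0 <= d x y.

Definition lip1 (f : T -> R) := forall x y, `|f x - f y| <= d x y.

Definition lip0_bounded (mu : Lip0 d p -> R) (c : R) :=
  forall f : Lip0 d p, lip1 (sval f) -> `|mu f| <= c.

Definition lip0_scalable (mu : Lip0 d p -> R) := forall (a : R) (f g : Lip0 d p),
  sval g = (fun x => a * sval f x) -> mu g = a * mu f.

Definition lip0_additive (mu : Lip0 d p -> R) := forall f g h : Lip0 d p,
  sval h = (fun x => sval f x + sval g x) -> mu h = mu f + mu g.

Lemma lip0_lipschitz (f : Lip0 d p) :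
  exists2 L, 0 <= L & forall x y, `|sval f x - sval f y| <= L * d x y.
Proof.
have [_ /ereal_inf_lt[_ [L [L_ge0 bound_L] _] _]] := svalP f.
by exists L => // x y; apply: bound_L.
Qed.

Lemma lip0_of_lipschitz (h : T -> R) (L : R) : h p = 0 -> 0 <= L ->
  (forall x y, `|h x - h y| <= L * d x y) -> lip0 d p h.
Proof.
move=> hp L_ge0 bound_L; split => //.
apply: (@le_lt_trans _ _ L%:E); last exact: ltry.
by rewrite lipc_le // => x y _ _; apply: bound_L.
Qed.

Definition Lip0_of (h : T -> R) (L : R) (hp : h p = 0) (L_ge0 : 0 <= L)
  (bound_L : forall x y, `|h x - h y| <= L * d x y) : Lip0 d p :=
  exist _ h (lip0_of_lipschitz hp L_ge0 bound_L).

Definition lip0_zero : Lip0 d p.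
Proof.
by apply: (@Lip0_of (fun=> 0) 0) => // x y; rewrite subrr normr0 mul0r.
Defined.

Lemma lipnorm_le1 (f : Lip0 d p) : (lipnorm f <= 1%:E)%E <-> lip1 (sval f).
Proof.
rewrite /lipnorm lipc_le //; split => [bound1 x y|lip1_f x y _ _].
  by have := bound1 x y I I; rewrite mul1r.
by rewrite mul1r; apply: lip1_f.
Qed.

Lemma dnorm_le (mu : Lip0 d p -> R) (c : R) :
  (dnorm mu <= c%:E)%E <-> lip0_bounded mu c.
Proof.
split => [le_c f lip1_f|bounded_c].
  rewrite -lee_fin; apply: le_trans le_c.
  by apply: ereal_sup_ubound; exists f => //; rewrite /= lipnorm_le1.
by apply: ub_ereal_sup => _ [f /lipnorm_le1 lip1_f <-]; rewrite lee_fin; apply: bounded_c.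
Qed.

Lemma dnorm_Lip0_ge0 (mu : Lip0 d p -> R) : (0 <= dnorm mu)%E.
Proof.
apply: (@le_trans _ _ (`|mu lip0_zero|)%:E); first by rewrite lee_fin.
apply: ereal_sup_ubound; exists lip0_zero => //.
by rewrite /= lipnorm_le1 // => x y /=; rewrite subrr normr0.
Qed.

Lemma dnorm_Lip0_0 : dnorm (0 : Lip0 d p -> R) = 0%E.
Proof.
apply/le_anti; rewrite dnorm_Lip0_ge0 andbT.
by apply/dnorm_le => f _; rewrite normr_le0.
Qed.

Lemma lip0_bounded_ge0 (mu : Lip0 d p -> R) (c : R) : lip0_bounded mu c -> 0 <= c.
Proof. by move/dnorm_le => le_c; rewrite -lee_fin (le_trans (dnorm_Lip0_ge0 mu)). Qed.

Definition dnormr (mu : Lip0 d p -> R) : R := fine (dnorm mu).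

Lemma dnormrE (mu : Lip0 d p -> R) (c : R) : lip0_bounded mu c ->
  dnorm mu = (dnormr mu)%:E.
Proof.
move/dnorm_le => le_c; rewrite /dnormr fineK // ge0_fin_numE ?dnorm_Lip0_ge0 //.
by apply: le_lt_trans le_c _; apply: ltry.
Qed.

Lemma dnormr_ge0 (mu : Lip0 d p -> R) : 0 <= dnormr mu.
Proof. exact/fine_ge0/dnorm_Lip0_ge0. Qed.

Lemma dnormr_bounded (mu : Lip0 d p -> R) (c : R) : lip0_bounded mu c ->
  lip0_bounded mu (dnormr mu).
Proof. by move=> bounded_c; apply/dnorm_le; rewrite -(dnormrE bounded_c). Qed.

Lemma dnormr_le (mu : Lip0 d p -> R) (c : R) : lip0_bounded mu c -> dnormr mu <= c.
Proof. by move=> bounded_c; rewrite -lee_fin -(dnormrE bounded_c); apply/dnorm_le. Qed.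

(* [L] may vanish, so [f] is rescaled by [1 / L'] for every [L' > L]. *)
Lemma lip0_bounded_lipschitz (mu : Lip0 d p -> R) (c L : R) (f : Lip0 d p) :
  lip0_scalable mu -> lip0_bounded mu c -> 0 <= L ->
  (forall x y, `|sval f x - sval f y| <= L * d x y) -> `|mu f| <= L * c.
Proof.
move=> scalable_mu bounded_c L_ge0 bound_L.
have c_ge0 := lip0_bounded_ge0 bounded_c.
apply/ler_addgt0Pr => e e_gt0; have c1_gt0 : 0 < c + 1 by rewrite ltr_wpDl.
pose L' := L + e / (c + 1).
have L'_gt0 : 0 < L' by rewrite ltr_wpDl // divr_gt0.
have g_lip (x y : T) : `|L'^-1 * sval f x - L'^-1 * sval f y| <= 1 * d x y.
  rewrite -mulrBr normrM gtr0_norm ?invr_gt0 // mul1r ler_pdivrMl //.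
  by rewrite (le_trans (bound_L x y)) // ler_wpM2r // lerDl divr_ge0 // ltW.
have g_p : L'^-1 * sval f p = 0 by have [-> _] := svalP f; rewrite mulr0.
pose g := @Lip0_of (fun x => L'^-1 * sval f x) 1 g_p ler01 g_lip.
have -> : mu f = L' * mu g.
  by apply: scalable_mu; apply: funext => x /=; rewrite mulrA mulfV ?gt_eqF ?mul1r.
rewrite normrM gtr0_norm //; apply: le_trans (ler_wpM2l (ltW L'_gt0) (_ : `|mu g| <= c)) _.
  by apply: bounded_c => x y; have := g_lip x y; rewrite mul1r.
rewrite /L' mulrDl lerD2l mulrAC ler_pdivrMr // ler_wpM2l ?ltW //.
by rewrite ltrDl.
Qed.

End Lip0.

(** * McShane extensions *)

Section McShane.
Variables (R : realType) (I Y : Type) (d : Y -> Y -> R).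
Variables (pos : I -> Y) (val : I -> R) (K : R) (i0 : I) (ids : seq I).

Definition mcshane (z : Y) : R :=
  foldr (fun i m => Order.min (val i + K * d z (pos i)) m) (val i0 + K * d z (pos i0)) ids.

Lemma mcshane_le z i : List.In i (i0 :: ids) -> mcshane z <= val i + K * d z (pos i).
Proof.
rewrite /mcshane; elim: ids => [|j js IHjs] /=; first by case=> [<-|[]].
rewrite ge_min => -[eq_i|[<-|in_i]]; first by rewrite IHjs ?orbT //; left.
  by rewrite lexx.
by rewrite IHjs ?orbT //; right.
Qed.

Lemma mcshane_attained z :
  exists2 i, List.In i (i0 :: ids) & mcshane z = val i + K * d z (pos i).
Proof.
rewrite /mcshane; elim: ids => [|j js [i in_i eq_i]] /=; first by exists i0; [left|].
rewrite eq_i minEle; case: ifP => _; first by exists j; [right; left|].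
by exists i => //; case: in_i => [<-|in_i]; [left|right; right].
Qed.

Lemma mcshane_lipschitz : is_metric d -> 0 <= K ->
  forall z z', `|mcshane z - mcshane z'| <= K * d z z'.
Proof.
move=> [_ _ d_sym d_tri] K_ge0.
have le_shift z z' : mcshane z <= mcshane z' + K * d z z'.
  have [i in_i ->] := mcshane_attained z'.
  apply: le_trans (mcshane_le z in_i) _; rewrite -addrA lerD2l -mulrDr.
  by rewrite ler_wpM2l // addrC.
move=> z z'; have := le_shift z z'; have := le_shift z' z; rewrite (d_sym z' z).
by rewrite ler_norml => ? ?; apply/andP; split; lra.
Qed.

Lemma mcshane_node : is_metric d ->
  (forall i j, List.In i (i0 :: ids) -> List.In j (i0 :: ids) ->
     val i - val j <= K * d (pos i) (pos j)) ->
  forall i, List.In i (i0 :: ids) -> mcshane (pos i) = val i.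
Proof.
move=> [_ d_eq0 _ _] bound_val i in_i; apply/eqP; rewrite eq_le.
rewrite (le_trans (mcshane_le _ in_i)) ?(proj2 (d_eq0 _ _)) ?mulr0 ?addr0 //=.
by have [j in_j ->] := mcshane_attained (pos i); rewrite -lerBlDl bound_val.
Qed.

End McShane.

(** * Elements of the Lipschitz-free space *)

Section FreeFunctionals.
Variables (R : realType) (T : Type) (d : T -> T -> R) (p : T).
Hypothesis d_ge0 : forall x y, 0 <= d x y.

Definition delta_approx (mu : Lip0 d p -> R) := forall e : R, 0 < e ->
  exists l : seq (R * T), forall f : Lip0 d p, lip1 d (sval f) ->
    `|mu f - \sum_(q <- l) q.1 * sval f q.2| <= e.

Definition free_functional (mu : Lip0 d p -> R) :=
  [/\ lip0_scalable mu, lip0_additive mu, exists c, lip0_bounded mu c & delta_approx mu].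

Lemma free_functional0 : free_functional 0.
Proof.
split.
- by move=> a f g _; rewrite mulr0.
- by move=> f g h _; rewrite addr0.
- by exists 0 => f _; rewrite normr0.
- by move=> e e_gt0; exists [::] => f _; rewrite big_nil subrr normr0 ltW.
Qed.

Lemma free_functional_comb a u w : free_functional u -> free_functional w ->
  free_functional (fun f => a * u f + w f).
Proof.
move=> [scal_u add_u [cu bnd_u] approx_u] [scal_w add_w [cw bnd_w] approx_w]; split.
- by move=> b f g eq_g; rewrite (scal_u _ _ _ eq_g) (scal_w _ _ _ eq_g); ring.
- by move=> f g h eq_h; rewrite (add_u _ _ _ eq_h) (add_w _ _ _ eq_h); ring.
- exists (`|a| * cu + cw) => f lip1_f.
  rewrite (le_trans (ler_normD _ _)) // normrM.
  by rewrite lerD ?ler_wpM2l ?bnd_u ?bnd_w.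
move=> e e_gt0; have a1_gt0 : 0 < 2 * (`|a| + 1) by rewrite mulr_gt0 // ltr_wpDl.
have [lu approx_lu] := approx_u (e / (2 * (`|a| + 1))) (divr_gt0 e_gt0 a1_gt0).
have [lw approx_lw] := approx_w (e / 2) (divr_gt0 e_gt0 (ltr0Sn _ 1)).
exists ([seq (a * q.1, q.2) | q <- lu] ++ lw) => f lip1_f.
rewrite big_cat big_map /=.
pose Su := \sum_(q <- lu) q.1 * sval f q.2; pose Sw := \sum_(q <- lw) q.1 * sval f q.2.
have -> : \sum_(q <- lu) a * q.1 * sval f q.2 = a * Su.
  by rewrite mulr_sumr; apply: eq_bigr => q _; rewrite mulrA.
have -> : a * u f + w f - (a * Su + Sw) = a * (u f - Su) + (w f - Sw) by ring.
rewrite (le_trans (ler_normD _ _)) // normrM.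
have le_u : `|a| * `|u f - Su| <= e / 2.
  apply: le_trans (ler_wpM2l (normr_ge0 a) (approx_lu f lip1_f)) _.
  rewrite mulrA ler_pdivrMr // (_ : e / 2 * _ = `|a| * e + e); last by field.
  by rewrite lerDl ltW.
by have := approx_lw f lip1_f; lra.
Qed.

Lemma free_functional_sum (I : Type) (r : seq I) (a : I -> R) (F : I -> Lip0 d p -> R) :
  (forall i, free_functional (F i)) ->
  free_functional (fun f => \sum_(i <- r) a i * F i f).
Proof.
move=> free_F; elim: r => [|i r IHr].
  by have := free_functional0; congr free_functional; apply: funext => f; rewrite big_nil.
have := free_functional_comb (a i) (free_F i) IHr.
by congr free_functional; apply: funext => f; rewrite big_cons.
Qed.

Lemma free_functional_lcomb s mu : (forall i, free_functional s`_i) ->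
  is_lcomb s mu -> free_functional mu.
Proof.
move=> free_s [c eq_mu]; have := free_functional_sum (index_enum 'I_(size s)) c free_s.
by congr free_functional; apply: funext => f; rewrite eq_mu.
Qed.

Lemma FreeSpace_free_functional mu : FreeSpace mu -> free_functional mu.
Proof.
move=> [[add_mu scal_mu dnorm_fin] approx_mu]; split => //.
  exists (dnormr mu); apply/(dnorm_le d_ge0).
  by rewrite /dnormr fineK // ge0_fin_numE // dnorm_Lip0_ge0.
move=> e e_gt0; have [psi [[n [a [s [delta_s ->]]]] dnorm_lt]] := approx_mu e e_gt0.
have [x eq_x] : {x : 'I_n -> T & forall i, @delta R T d p (x i) = s i}.
  apply: (@choice _ _ (fun i y => @delta R T d p y = s i)) => i.
  by case: (delta_s i) => y _ <-; exists y.
exists [seq (a i, x i) | i <- index_enum 'I_n] => f lip1_f.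
have /(dnorm_le d_ge0) bnd_e := ltW dnorm_lt.
have eq_f : (mu - \sum_(i < n) a i *: s i) f = mu f - \sum_(i < n) a i * sval f (x i).
  by rewrite fct_sumE; congr (_ - _); apply: eq_bigr => i _; rewrite -eq_x.
by have := bnd_e f lip1_f; rewrite eq_f big_map.
Qed.

End FreeFunctionals.

Lemma span_is_lcomb (R : realType) (L : Type) (s : seq (L -> R)) (mu : L -> R) :
  Defs.span [set v | v \in s] mu <-> is_lcomb s mu.
Proof.
split => [[n [a [t [t_in_s ->]]]]|[c eq_mu]]; last first.
  exists (size s), (fun i => c i), (fun i => s`_i); split => [i|]; first exact: mem_nth.
  by apply: funext => f; rewrite eq_mu fct_sumE.
exists (fun j => \sum_(i < n) a i * (index (t i) s == j)%:R) => f.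
rewrite fct_sumE; under [RHS]eq_bigr => j _ do rewrite mulr_suml.
rewrite exchange_big /=; apply: eq_bigr => i _.
have lt_is : (index (t i) s < size s)%N by rewrite index_mem; apply: t_in_s.
rewrite (eq_bigr (fun j : 'I_(size s) => a i * (s`_j f * (index (t i) s == j)%:R))).
  by rewrite -mulr_sumr (sum_kronecker (fun j => s`_j f)) // nth_index //; apply: t_in_s.
by move=> j _; ring.
Qed.

Lemma FreeSpace_delta_sum (R : realType) (T : Type) (d : T -> T -> R) (p : T)
  (l : seq (R * T)) : (forall x y, 0 <= d x y) ->
  FreeSpace (\sum_(q <- l) q.1 *: @delta R T d p q.2).
Proof.
move=> d_ge0; set mu := \sum_(q <- l) _.
have muE f : mu f = \sum_(q <- l) q.1 * sval f q.2 by rewrite /mu fct_sumE.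
split; [split|].
- by move=> f g h eq_h; rewrite !muE eq_h -big_split; apply: eq_bigr => q _ /=; ring.
- by move=> a f g eq_g; rewrite !muE eq_g mulr_sumr; apply: eq_bigr => q _ /=; ring.
- apply: (@le_lt_trans _ _ (\sum_(q <- l) `|q.1| * d q.2 p)%:E); last exact: ltry.
  apply/(dnorm_le d_ge0) => f lip1_f; rewrite muE (le_trans (ler_norm_sum _ _ _)) //.
  apply: ler_sum => q _; rewrite normrM ler_wpM2l //.
  by have := lip1_f q.2 p; have [-> _] := svalP f; rewrite subr0.
- move=> e e_gt0; exists mu; split.
    exists (size l), (fun i => (nth (0, p) l i).1), (fun i => @delta R T d p (nth (0, p) l i).2).
    split; first by move=> i; exists (nth (0, p) l i).2.
    by rewrite /mu (big_nth (0, p)) big_mkord.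
  rewrite subrr (@le_lt_trans _ _ 0%:E) ?lte_fin //; apply/(dnorm_le d_ge0) => f _.
  by rewrite normr0.
Qed.

Lemma normdist_metric (R : realType) (X : normedModType R) : is_metric (@normdist R X).
Proof.
rewrite /normdist; split => [x y|x y|x y|x y z].
- exact: normr_ge0.
- split => [/eqP|->]; last by rewrite subrr normr0.
  by rewrite normr_eq0 subr_eq0 => /eqP.
- exact: distrC.
- by rewrite (le_trans _ (ler_normD _ _)) // addrA subrK.
Qed.

Section DistortionBounds.
Variables (R : realType) (T U : Type) (dT : T -> T -> R) (dU : U -> U -> R).
Variables (D : set T) (f : T -> U).

Lemma lipschitz_bounds_of_distortion (c e : R) :
  (forall x y, 0 <= dT x y) -> (forall x y, 0 <= dU x y) -> 0 < e ->
  (exists x y, [/\ D x, D y, 0 < dT x y & 0 < dU (f x) (f y)]) ->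
  (distortion dT dU D f <= c%:E)%E ->
  exists A B : R, [/\ 0 < A, 0 < B, A * B <= c + e,
     forall x y, D x -> D y -> dU (f x) (f y) <= A * dT x y &
     forall x y, D x -> D y -> dT x y <= B * dU (f x) (f y)].
Proof.
move=> dT_ge0 dU_ge0 e_gt0 [x [y [Dx Dy dxy_gt0 dfxy_gt0]]].
rewrite /distortion /lipc_inv -/(lipc (fun x y => dU (f x) (f y)) dT D id).
set a := lipc dT dU D f; set b := lipc _ _ _ _ => le_ab.
have a_gt0 : (0 < a)%E by apply: lipc_gt0 Dx Dy _.
have b_gt0 : (0 < b)%E by apply: (@lipc_gt0 _ _ _ _ _ _ id x y).
have a_fin : a \is a fin_num.
  rewrite ge0_fin_numE ?ltW // ltey; apply: contraTneq le_ab => ->.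
  by rewrite gt0_mulye // leye_eq.
have b_fin : b \is a fin_num.
  rewrite ge0_fin_numE ?ltW // ltey; apply: contraTneq le_ab => ->.
  by rewrite gt0_muley // leye_eq.
move: a_gt0 b_gt0 le_ab; rewrite -(fineK a_fin) -(fineK b_fin) -EFinM !lte_fin lee_fin.
set ra := fine a; set rb := fine b => ra_gt0 rb_gt0 le_rab.
(* [eta <= 1] and [eta (ra + rb + 1) <= e] give [(ra + eta) (rb + eta) <= c + e]. *)
pose eta := e / (ra + rb + e + 1).
have eta_gt0 : 0 < eta by rewrite divr_gt0 //; lra.
have eta_le1 : eta <= 1 by rewrite ler_pdivrMr ?mul1r; lra.
have eta_e : eta * (ra + rb + e + 1) = e by rewrite mulfVK //; lra.
exists (ra + eta), (rb + eta); split; [lra|lra| | |].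
- have : eta * eta <= eta * 1 by apply: ler_wpM2l => //; exact: ltW.
  have : 0 <= eta * e by rewrite mulr_ge0 ?ltW.
  nra.
- have c_ge0 : 0 <= ra + eta by lra.
  apply/(lipc_le dU dT_ge0 D f c_ge0).
  by rewrite -/a -(fineK a_fin) lee_fin lerDl ltW.
- have c_ge0 : 0 <= rb + eta by lra.
  apply/(lipc_le dT (fun x y => dU_ge0 (f x) (f y)) D id c_ge0).
  by rewrite -/b -(fineK b_fin) lee_fin lerDl ltW.
Qed.

End DistortionBounds.

Lemma lipschitz_bounds_of_injective (R : realType) (T U : Type) (dT : T -> T -> R)
  (dU : U -> U -> R) (D : set T) (f : T -> U) (c e : R) :
  is_metric dT -> is_metric dU -> 1 <= c -> 0 < e ->
  (forall x y, D x -> D y -> f x = f y -> x = y) ->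
  (distortion dT dU D f <= c%:E)%E ->
  exists A B : R, [/\ 0 < A, 0 < B, A * B <= c + e,
     forall x y, D x -> D y -> dU (f x) (f y) <= A * dT x y &
     forall x y, D x -> D y -> dT x y <= B * dU (f x) (f y)].
Proof.
move=> [dT_ge0 dT_eq0 _ _] [dU_ge0 dU_eq0 _ _] c_ge1 e_gt0 f_inj.
case: (pselect (exists x y, [/\ D x, D y & x <> y])) => [[x [y [Dx Dy neq_xy]]]|trivial_D].
  apply: lipschitz_bounds_of_distortion => //; exists x, y; split => //.
    by rewrite lt_def dT_ge0 andbT; apply/eqP => /dT_eq0.
  by rewrite lt_def dU_ge0 andbT; apply/eqP => /dU_eq0 /(f_inj _ _ Dx Dy).
have eq_D x y : D x -> D y -> x = y.
  by move=> Dx Dy; apply: contrapT => neq_xy; apply: trivial_D; exists x, y.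
exists 1, 1; split => //; first by lra.
  by move=> x y Dx Dy; rewrite (eq_D x y) // (proj2 (dU_eq0 _ _)) // mul1r.
by move=> x y Dx Dy; rewrite (eq_D x y) // (proj2 (dT_eq0 _ _)) // mul1r.
Qed.

Section BanachMazurBound.
Variables (R : realType) (V1 V2 : lmodType R) (N1 : V1 -> \bar R) (N2 : V2 -> \bar R).
Variables (E : set V1) (F : set V2) (T : V1 -> V2) (a b : R).
Hypotheses (N1_ge0 : forall u, (0 <= N1 u)%E) (N2_ge0 : forall w, (0 <= N2 w)%E).
Hypotheses (N1_0 : N1 0 = 0%E) (N2_0 : N2 0 = 0%E) (E_0 : E 0).
Hypothesis T_linear : forall c u w, T (c *: u + w) = c *: T u + T w.
Hypotheses (T_into : forall u, E u -> F (T u)) (T_onto : forall w, F w -> exists2 u, E u & T u = w).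
Hypothesis T_inj : forall u u', E u -> E u' -> T u = T u' -> u = u'.
Hypotheses (a_ge0 : 0 <= a) (b_ge0 : 0 <= b).
Hypothesis T_le : forall u, E u -> (N2 (T u) <= a%:E * N1 u)%E.
Hypothesis T_ge : forall u, E u -> (N1 u <= b%:E * N2 (T u))%E.

Lemma bm_dist_le : (bm_dist N1 N2 E F <= (a * b)%:E)%E.
Proof.
have T_0 : T 0 = 0.
  by have := T_linear (-1) 0 0; rewrite scaler0 addr0 scaleN1r addNr.
pose S w := xget 0 [set u | E u /\ T u = w].
have S_spec w : F w -> E (S w) /\ T (S w) = w.
  by move=> /T_onto[u Eu Tu]; apply: (@xgetPex _ 0 [set u | E u /\ T u = w]); exists u.
have iso : lin_iso E F T S.
  split => [u|w /S_spec[]//|u Eu|w /S_spec[]//|c u w _ _]; [exact: T_into| |exact: T_linear].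
  by have [ESu TSu] := S_spec _ (T_into Eu); apply: T_inj.
have le_T : (opnorm N1 N2 E T <= a%:E)%E.
  apply: ub_ereal_sup => _ [u [Eu le_u1] <-]; apply: le_trans (T_le Eu) _.
  by rewrite -[leRHS]mule1 lee_wpmul2l ?lee_fin.
have le_S : (opnorm N2 N1 F S <= b%:E)%E.
  apply: ub_ereal_sup => _ [w [Fw le_w1] <-]; have [ESw TSw] := S_spec _ Fw.
  apply: le_trans (T_ge ESw) _; rewrite TSw.
  by rewrite -[leRHS]mule1 lee_wpmul2l ?lee_fin.
have ge0_T : (0 <= opnorm N1 N2 E T)%E.
  apply: le_trans (N2_ge0 (T 0)) _; apply: ereal_sup_ubound.
  by exists 0 => //; split => //; rewrite N1_0.
have ge0_S : (0 <= opnorm N2 N1 F S)%E.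
  apply: le_trans (N1_ge0 (S 0)) _; apply: ereal_sup_ubound.
  by exists 0 => //; split; [rewrite -T_0; apply: T_into | rewrite N2_0].
apply: (@le_trans _ _ (opnorm N1 N2 E T * opnorm N2 N1 F S)%E).
  by apply: ereal_inf_lbound; exists (T, S).
by rewrite EFinM lee_pmul.
Qed.

End BanachMazurBound.

(** * Transferring a subspace of F(M) into F(X) *)

(* [M] has no decidable equality, so finite sets of points are Stdlib lists. *)
Definition approx_nodes (R : realType) (M : Type) (k : nat)
  (sa : nat -> seq (R * M)) : list M :=
  List.flat_map (fun j => List.map snd (sa j)) (List.seq 0 k).

Lemma In_approx_nodes (R : realType) (M : Type) k (sa : nat -> seq (R * M)) j q :
  (j < k)%N -> List.In q (sa j) -> List.In q.2 (approx_nodes k sa).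
Proof.
move=> /ssrnat.ltP lt_jk in_q; apply/List.in_flat_map; exists j; split.
  by apply/List.in_seq; split; [apply: le_0_n|].
exact: List.in_map.
Qed.

Lemma finite_set_In (T : Type) (l : list T) : finite_set [set y | List.In y l].
Proof.
elim: l => [|a l IHl].
  have -> : [set y | List.In y [::]] = set0 :> set T by apply/seteqP; split => y.
  exact: finite_set0.
have -> : [set y | List.In y (a :: l)] = a |` [set y | List.In y l].
  by apply/seteqP; split => y /= [->|in_y]; by [left|right].
by rewrite finite_setU; split => //; apply: finite_set1.
Qed.

Lemma eq_big_In (R : Type) (idx : R) (op : Monoid.law idx) (I : Type) (r : seq I)
  (F G : I -> R) : (forall i, List.In i r -> F i = G i) ->
  \big[op/idx]_(i <- r) F i = \big[op/idx]_(i <- r) G i.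
Proof.
elim: r => [|i r IHr] eq_FG; first by rewrite !big_nil.
by rewrite !big_cons eq_FG ?IHr //= => [j in_j|]; [apply: eq_FG; right|left].
Qed.

Section Transfer.
Variables (R : realType) (M : Type) (dM : M -> M -> R) (p : M) (X : normedModType R).
Hypothesis hM : is_metric dM.
Variable s : seq (Lip0 dM p -> R).
Hypothesis s_free : forall i, free_functional s`_i.
Variables (k : nat) (v : nat -> Lip0 dM p -> R) (x : nat -> Lip0 dM p).
Hypotheses (bio : biorthogonal k v x) (v_lcomb : forall j, is_lcomb s (v j)).
Hypothesis rep : forall mu, is_lcomb s mu -> reproduces k v x mu.
Variable K : nat -> R.
Hypothesis K_ge0 : forall j, 0 <= K j.
Hypothesis K_lipschitz : forall j a b, `|sval (x j) a - sval (x j) b| <= K j * dM a b.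
Variables (del : R) (sa : nat -> seq (R * M)).
Hypothesis sa_approx : forall j (f : Lip0 dM p), lip1 dM (sval f) ->
  `|v j f - \sum_(q <- sa j) q.1 * sval f q.2| <= del.
Hypothesis del_ge0 : 0 <= del.
Variable theta : R.
Hypotheses (err_le : (\sum_(j < k) K j) * del <= theta) (theta_lt1 : theta < 1).
Variables (phi : M -> X) (A B : R).
Hypotheses (A_gt0 : 0 < A) (B_gt0 : 0 < B).
Let nodes := p :: approx_nodes k sa.
Hypothesis phi_le : forall y y', List.In y nodes -> List.In y' nodes ->
  normdist (phi y) (phi y') <= A * dM y y'.
Hypothesis phi_ge : forall y y', List.In y nodes -> List.In y' nodes ->
  dM y y' <= B * normdist (phi y) (phi y').

Let dM_ge0 a b : 0 <= dM a b. Proof. by case: hM. Qed.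
Let dX_ge0 (a b : X) : 0 <= normdist a b. Proof. by case: (normdist_metric X). Qed.
Let lcomb_free u : is_lcomb s u -> free_functional u.
Proof. exact: free_functional_lcomb. Qed.

Let psi y := phi y - phi p.

Let dist_psi y y' : normdist (psi y) (psi y') = normdist (phi y) (phi y').
Proof. by rewrite /normdist /psi opprB addrA subrK. Qed.

(* [transfer u] replaces [v j] in [u = \sum_j u (x j) v j] by its discrete approximation
   [sa j], pushed forward by [psi]. *)
Definition transfer_basis j : Lip0 (@normdist R X) 0 -> R :=
  \sum_(q <- sa j) q.1 *: @delta R X (@normdist R X) 0 (psi q.2).

Definition transfer (u : Lip0 dM p -> R) : Lip0 (@normdist R X) 0 -> R :=
  \sum_(j < k) u (x j) *: transfer_basis j.

Definition discretize (u : Lip0 dM p -> R) (h : Lip0 dM p) : R :=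
  \sum_(j < k) u (x j) * \sum_(q <- sa j) q.1 * sval h q.2.

Lemma transferE u g :
  transfer u g = \sum_(j < k) u (x j) * \sum_(q <- sa j) q.1 * sval g (psi q.2).
Proof. by rewrite /transfer fct_sumE; apply: eq_bigr => j _; rewrite /= /transfer_basis fct_sumE. Qed.

Lemma discretize_err u : is_lcomb s u ->
  lip0_bounded (fun h => u h - discretize u h) (theta * dnormr u).
Proof.
move=> lc_u h lip1_h /=; have [scal_u _ [c bnd_u] _] := lcomb_free lc_u.
rewrite [u h](rep lc_u) /discretize -sumrB.
under eq_bigr do rewrite -mulrBr.
rewrite (le_trans (ler_norm_sum _ _ _)) // (le_trans _ (ler_wpM2r (dnormr_ge0 dM_ge0 u) err_le)) //.
rewrite !mulr_suml; apply: ler_sum => j _.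
rewrite normrM mulrAC ler_pM //; last exact: sa_approx.
exact: (lip0_bounded_lipschitz dM_ge0 scal_u (dnormr_bounded dM_ge0 bnd_u)).
Qed.

Lemma transfer_scalable u : lip0_scalable (transfer u).
Proof.
move=> a g g' eq_g'; rewrite !transferE eq_g' mulr_sumr; apply: eq_bigr => j _ /=.
by rewrite mulrCA; congr (_ * _); rewrite mulr_sumr; apply: eq_bigr => q _; ring.
Qed.

Lemma discretize_err_lipschitz u (h : Lip0 dM p) L : is_lcomb s u -> 0 <= L ->
  (forall a b, `|sval h a - sval h b| <= L * dM a b) ->
  `|u h - discretize u h| <= L * (theta * dnormr u).
Proof.
move=> lc_u L_ge0 h_lip; have [scal_u _ _ _] := lcomb_free lc_u.
have scal_err : lip0_scalable (fun h => u h - discretize u h).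
  move=> a f f' eq_f'; rewrite (scal_u _ _ _ eq_f') /discretize eq_f' mulrBr mulr_sumr.
  congr (_ - _); apply: eq_bigr => j _ /=.
  by rewrite mulrCA; congr (_ * _); rewrite mulr_sumr; apply: eq_bigr => q _; ring.
exact: (lip0_bounded_lipschitz dM_ge0 scal_err (discretize_err lc_u) L_ge0 h_lip).
Qed.

Lemma transfer_le u : is_lcomb s u ->
  lip0_bounded (transfer u) (A * (1 + theta) * dnormr u).
Proof.
move=> lc_u g lip1_g; have [scal_u _ [c bnd_u] _] := lcomb_free lc_u.
pose val y := sval g (psi y).
have val_le y y' : List.In y nodes -> List.In y' nodes -> val y - val y' <= A * dM y y'.
  move=> in_y in_y'; rewrite (le_trans (ler_norm _)) // (le_trans (lip1_g _ _)) //.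
  by rewrite dist_psi phi_le.
have h_lip := mcshane_lipschitz id val p (approx_nodes k sa) hM (ltW A_gt0).
have h_node := mcshane_node hM val_le.
have h_p : mcshane dM id val A p (approx_nodes k sa) p = 0.
  by rewrite (h_node p) /val /psi ?subrr; [have [] := svalP g | left].
pose h := Lip0_of dM_ge0 h_p (ltW A_gt0) h_lip.
have -> : transfer u g = discretize u h.
  rewrite transferE; apply: eq_bigr => j _; congr (_ * _); apply: eq_big_In => q in_q /=.
  by rewrite (h_node q.2) //; right; apply: In_approx_nodes in_q.
have le_uh : `|u h| <= A * dnormr u.
  exact: (@lip0_bounded_lipschitz _ _ _ _ dM_ge0 u _ _ h scal_u (dnormr_bounded dM_ge0 bnd_u)
    (ltW A_gt0) h_lip).
have le_err := discretize_err_lipschitz (h := h) lc_u (ltW A_gt0) h_lip.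
have -> : discretize u h = u h - (u h - discretize u h) by ring.
have -> : A * (1 + theta) * dnormr u = A * dnormr u + A * (theta * dnormr u) by ring.
by rewrite (le_trans (ler_normB _ _)) // lerD.
Qed.

Lemma transfer_ge u c : is_lcomb s u -> lip0_bounded (transfer u) c ->
  dnormr u <= B * c + theta * dnormr u.
Proof.
move=> lc_u bnd_T; apply: (dnormr_le dM_ge0) => h lip1_h.
have val_le y y' : List.In y nodes -> List.In y' nodes ->
    sval h y - sval h y' <= B * normdist (psi y) (psi y').
  move=> in_y in_y'; rewrite (le_trans (ler_norm _)) // (le_trans (lip1_h _ _)) //.
  by rewrite dist_psi phi_ge.
have g_lip := mcshane_lipschitz psi (sval h) p (approx_nodes k sa) (normdist_metric X) (ltW B_gt0).
have g_node := mcshane_node (normdist_metric X) val_le.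
have g_0 : mcshane (@normdist R X) psi (sval h) B p (approx_nodes k sa) 0 = 0.
  by rewrite -(subrr (phi p)) (g_node p); [have [] := svalP h | left].
pose g := Lip0_of dX_ge0 g_0 (ltW B_gt0) g_lip.
have eq_disc : discretize u h = transfer u g.
  rewrite transferE; apply: eq_bigr => j _; congr (_ * _); apply: eq_big_In => q in_q /=.
  by rewrite (g_node q.2) //; right; apply: In_approx_nodes in_q.
have -> : u h = transfer u g + (u h - discretize u h) by rewrite -eq_disc addrC subrK.
rewrite (le_trans (ler_normD _ _)) // lerD //; last exact: discretize_err.
exact: (@lip0_bounded_lipschitz _ _ _ _ dX_ge0 _ _ _ g (transfer_scalable u) bnd_T (ltW B_gt0) g_lip).
Qed.

Lemma transfer_linear a u w : transfer (a *: u + w) = a *: transfer u + transfer w.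
Proof.
rewrite /transfer scaler_sumr -big_split /=; apply: eq_bigr => j _.
by rewrite scalerA -scalerDl.
Qed.

Lemma transfer_eval u g : transfer u g = \sum_(j < k) u (x j) * transfer_basis j g.
Proof. by rewrite /transfer fct_sumE. Qed.

Lemma transfer_basis_FreeSpace j : FreeSpace (transfer_basis j).
Proof.
have := FreeSpace_delta_sum 0 [seq (q.1, psi q.2) | q <- sa j] dX_ge0.
by rewrite big_map.
Qed.

Lemma transfer_inj u u' : is_lcomb s u -> is_lcomb s u' -> transfer u = transfer u' -> u = u'.
Proof.
move=> lc_u lc_u' eq_T; pose z := (-1) *: u' + u.
have lc_z : is_lcomb s z by apply: is_lcomb_comb.
have bnd_Tz : lip0_bounded (transfer z) 0.
  move=> g _; rewrite /z transfer_linear eq_T.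
  by rewrite scaleN1r addNr normr0.
have z_eq0 : dnormr z <= 0.
  have := transfer_ge lc_z bnd_Tz; have := dnormr_ge0 dM_ge0 z.
  by rewrite mulr0 add0r; move: theta_lt1; set m := dnormr z; nra.
have [scal_z _ [c bnd_z] _] := lcomb_free lc_z.
apply: funext => f; have [L L_ge0 f_lip] := lip0_lipschitz f.
have := lip0_bounded_lipschitz dM_ge0 scal_z (dnormr_bounded dM_ge0 bnd_z) L_ge0 f_lip.
move=> /le_trans /(_ (ler_wpM2l L_ge0 z_eq0)); rewrite mulr0 normr_le0 => /eqP.
by rewrite /z !fctE scaleN1r => zf0; lra.
Qed.

Lemma transfer_into u : is_lcomb (mkseq transfer_basis k) (transfer u).
Proof.
exists (fun j => u (x j)) => g; rewrite transfer_eval size_mkseq.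
by apply: eq_bigr => j _; rewrite nth_mkseq.
Qed.

Lemma transfer_onto w : is_lcomb (mkseq transfer_basis k) w ->
  exists2 u, is_lcomb s u & transfer u = w.
Proof.
move=> [c eq_w]; rewrite size_mkseq in eq_w.
exists (fun f => \sum_(i < k) c i * v i f); first exact: is_lcomb_sum.
apply: funext => g; rewrite transfer_eval eq_w.
under eq_bigr do rewrite mulr_suml.
rewrite exchange_big /=; apply: eq_bigr => i _; rewrite nth_mkseq //.
rewrite -(sum_kronecker (fun j => c i * transfer_basis j g) (ltn_ord i)).
by apply: eq_bigr => j _; rewrite bio // mulrAC.
Qed.

Lemma dnorm_transfer_le u : is_lcomb s u ->
  (dnorm (transfer u) <= (A * (1 + theta))%:E * dnorm u)%E.
Proof.
move=> lc_u; have [_ _ [c bnd_u] _] := lcomb_free lc_u.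
rewrite (dnormrE dM_ge0 bnd_u) -EFinM; apply/(dnorm_le dX_ge0).
exact: transfer_le.
Qed.

Lemma dnorm_transfer_ge u : is_lcomb s u ->
  (dnorm u <= (B / (1 - theta))%:E * dnorm (transfer u))%E.
Proof.
move=> lc_u; have [_ _ [c bnd_u] _] := lcomb_free lc_u.
have bnd_T := transfer_le lc_u.
rewrite (dnormrE dM_ge0 bnd_u) (dnormrE dX_ge0 bnd_T) -EFinM lee_fin.
rewrite mulrAC ler_pdivlMr ?subr_gt0 //.
by have := transfer_ge lc_u (dnormr_bounded dX_ge0 bnd_T); lra.
Qed.

Lemma transfer_bm_dist :
  (bm_dist (@dnorm R M dM p) (@dnorm R X (@normdist R X) 0%R)
     (Defs.span [set u | u \in s]) (Defs.span [set w | w \in mkseq transfer_basis k])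
   <= (A * (1 + theta) * (B / (1 - theta)))%:E)%E.
Proof.
have theta_ge0 : 0 <= theta.
  by rewrite (le_trans _ err_le) // mulr_ge0 // sumr_ge0.
apply: bm_dist_le => [||||||u /span_is_lcomb lc_u|w /span_is_lcomb /transfer_onto[u lc_u <-]|
    u u' /span_is_lcomb lc_u /span_is_lcomb lc_u'|||u /span_is_lcomb|u /span_is_lcomb].
- exact: dnorm_Lip0_ge0.
- exact: dnorm_Lip0_ge0.
- exact: dnorm_Lip0_0.
- exact: dnorm_Lip0_0.
- exact/span_is_lcomb/is_lcomb0.
- exact: transfer_linear.
- exact/span_is_lcomb/transfer_into.
- by exists u => //; apply/span_is_lcomb.
- exact: transfer_inj.
- by rewrite mulr_ge0 ?addr_ge0 ?(ltW A_gt0).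
- by rewrite divr_ge0 ?subr_ge0 ?ltW.
- exact: dnorm_transfer_le.
- exact: dnorm_transfer_ge.
Qed.

End Transfer.

Lemma free_span_bm_dist_le (R : realType) (M : Type) (dM : M -> M -> R) (p : M)
  (X : normedModType R) (s : seq (Lip0 dM p -> R)) (theta : R) :
  is_metric dM -> (forall mu, mu \in s -> FreeSpace mu) -> 0 < theta < 1 ->
  exists nodes : list M, forall (phi : M -> X) (A B : R), 0 < A -> 0 < B ->
    (forall y y', List.In y nodes -> List.In y' nodes ->
       normdist (phi y) (phi y') <= A * dM y y') ->
    (forall y y', List.In y nodes -> List.In y' nodes ->
       dM y y' <= B * normdist (phi y) (phi y')) ->
    exists F, fd_subspace (@FreeSpace R X (@normdist R X) 0%R) F /\
      (bm_dist (@dnorm R M dM p) (@dnorm R X (@normdist R X) 0%R)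
         (Defs.span [set u | u \in s]) F <= (A * (1 + theta) * (B / (1 - theta)))%:E)%E.
Proof.
move=> hM s_FreeSpace /andP[theta_gt0 theta_lt1].
have dM_ge0 : forall a b, 0 <= dM a b by case: hM.
have s_free i : free_functional s`_i.
  have [lt_is|le_si] := ltnP i (size s); last by rewrite nth_default //; apply: free_functional0.
  exact/(FreeSpace_free_functional dM_ge0)/s_FreeSpace/mem_nth.
have [k [v [x [bio lc_v rep]]]] := lagrange_basis s (lip0_zero p dM_ge0).
have [K K_spec] : {K : nat -> R & forall j, 0 <= K j /\
    forall a b, `|sval (x j) a - sval (x j) b| <= K j * dM a b}.
  apply: (@choice _ _ (fun j L => 0 <= L /\ forall a b,
    `|sval (x j) a - sval (x j) b| <= L * dM a b)) => j.
  by have [L L_ge0 x_lip] := lip0_lipschitz (x j); exists L.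
pose C := \sum_(j < k) K j.
have C_ge0 : 0 <= C by apply: sumr_ge0 => j _; case: (K_spec j).
pose del := theta / (C + 1).
have del_gt0 : 0 < del by rewrite divr_gt0 // ltr_wpDl.
have Cdel_le : C * del <= theta by rewrite /del mulrA ler_pdivrMr ?ltr_wpDl //; nra.
have [sa sa_approx] : {sa : nat -> seq (R * M) & forall j f, lip1 dM (sval f) ->
    `|v j f - \sum_(q <- sa j) q.1 * sval f q.2| <= del}.
  apply: (@choice _ _ (fun j l => forall f, lip1 dM (sval f) ->
    `|v j f - \sum_(q <- l) q.1 * sval f q.2| <= del)) => j.
  by have [_ _ _] := free_functional_lcomb s_free (lc_v j); apply.
exists (p :: approx_nodes k sa) => phi A B A_gt0 B_gt0 phi_le phi_ge.
exists (Defs.span [set w | w \in mkseq (transfer_basis p sa phi) k]); split.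
  exists (mkseq (transfer_basis p sa phi) k); split => // w /mapP[j _ ->].
  exact: transfer_basis_FreeSpace.
exact: (transfer_bm_dist hM s_free bio lc_v rep (fun j => (K_spec j).1)
  (fun j => (K_spec j).2) sa_approx (ltW del_gt0) Cdel_le theta_lt1 A_gt0 B_gt0 phi_le phi_ge).
Qed.

Unset Implicit Arguments.
Set Strict Implicit.

Theorem theorem4p7 (R : realType) (M : Type) (dM : M -> M -> R)
  (hM : is_metric dM) (p : M) (X : completeNormedModType R) (lam : R)
  (hlam : 1 <= lam) :
  fin_lip_representable dM (@normdist R X) lam ->
  fin_representable (@dnorm R M dM p) (@FreeSpace R M dM p)
    (@dnorm R X (@normdist R X) 0) (@FreeSpace R X (@normdist R X) 0) lam.
Proof.
move=> lip_rep E [s [s_free ->]] eps eps_gt0.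
pose theta := eps / (8 * (lam + eps)).
have theta_eps : theta * (8 * (lam + eps)) = eps by rewrite mulfVK // mulf_neq0 //; lra.
have theta_01 : 0 < theta < 1.
  by rewrite divr_gt0 ?mulr_gt0 ?ltr_pdivrMr ?mulr_gt0 //=; lra.
have [nodes bm_nodes] := free_span_bm_dist_le X hM s_free theta_01.
have eps4_gt0 : 0 < eps / 4 by rewrite divr_gt0.
have [phi [phi_inj phi_dist]] := lip_rep _ (finite_set_In nodes) _ eps4_gt0.
have c_ge1 : 1 <= lam + eps / 4 by lra.
have [A [B [A_gt0 B_gt0 AB_le phi_le phi_ge]]] :=
  lipschitz_bounds_of_injective hM (normdist_metric X) c_ge1 eps4_gt0 phi_inj phi_dist.
have [F [fd_F le_F]] := bm_nodes phi A B A_gt0 B_gt0 phi_le phi_ge.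
exists F; split => //; apply: le_trans le_F _; rewrite lee_fin.
case/andP: theta_01 => theta_gt0 theta_lt1.
rewrite mulrA ler_pdivrMr ?subr_gt0 //.
have := ler_wpM2l (ltW theta_gt0) AB_le; nra.
Qed.
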